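(* For every $n\ge 1$: (1) $|C^*_{n+1}| = \sum_{k=0}^{n-1} [b^k a^{n-1-k}]$; (2) $|C^*_{n+1}| \le \alpha_n \le |C^*_{n+1}| + |C^*_{n+2}| \le 2|C^*_{n+2}|$.
   Context: For $\pi \in S_m$, a pair $1\le i<j\le m$ is a stretching pair if $\pi(i) < i < j < \pi(j)$; $C^*_m$ is the set of $m$-cycles (permutations of $[m]$ consisting of one cycle of length $m$) with no stretching pairs. For non-negative integers $p+q=n-1$, $[b^p a^q]$ is the number of $\pi \in S_n$ such that, for $i\in[n-1]$, $\pi(i)>i$ iff $i \in\{1,\dots,p\}$. $\alpha_n$ is the number of $\pi \in S_n$ for which there are no indices $1\le i<i+1<j<j+1\le n$ with $\pi(i+1)<\pi(i)<\pi(j)<\pi(j+1)$ (pattern $21\text{-}34$) and no such indices with $\pi(j+1)<\pi(j)<\pi(i)<\pi(i+1)$ (pattern $34\text{-}21$). *)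

From mathcomp Require Import all_boot all_fingroup.
Set Implicit Arguments. Unset Strict Implicit. Unset Printing Implicit Defensive.

(* Permutations of [m] are encoded as {perm 'I_m}, i.e. 0-based: the
   1-based value pi(i) corresponds to (s (i-1)) + 1. All conditions below
   are comparisons, hence invariant under this shift. *)

Definition is_full_cycle (m : nat) (s : {perm 'I_m}) : bool :=
  #|porbits s| == 1.

Definition stretching_pair (m : nat) (s : {perm 'I_m}) (i j : 'I_m) : bool :=
  [&& (nat_of_ord i < nat_of_ord j)%N,
      (nat_of_ord (s i) < nat_of_ord i)%N &
      (nat_of_ord j < nat_of_ord (s j))%N].

Definition Cstar (m : nat) : {set {perm 'I_m}} :=
  [set s : {perm 'I_m} | is_full_cycle s &&
     ~~ [exists i : 'I_m, exists j : 'I_m, stretching_pair s i j]].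

(* [b^p a^q] with p + q = n - 1: number of pi in S_n such that for
   i in [n-1] (1-based), pi(i) > i iff i in {1..p}.
   0-based: for i < n-1, s i > i iff i < p. *)
Definition bacount (n p : nat) : nat :=
  #|[set s : {perm 'I_n} |
      [forall i : 'I_n, (nat_of_ord i < n.-1)%N ==>
         ((nat_of_ord i < nat_of_ord (s i))%N == (nat_of_ord i < p)%N)]]|.

(* value of a permutation at a nat position (0 outside the range) *)
Definition pv (n : nat) (s : {perm 'I_n}) (k : nat) : nat :=
  if insub k is Some i then nat_of_ord (s i) else 0.

(* occurrence of 21-34 or 34-21 at (0-based) positions i, i+1, j, j+1
   with i+1 < j and j+1 <= n-1 *)
Definition bad_occ (n : nat) (s : {perm 'I_n}) (i j : nat) : bool :=
  [&& (i.+1 < j)%N, (j.+1 < n)%N &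
      ([&& (pv s i.+1 < pv s i)%N, (pv s i < pv s j)%N & (pv s j < pv s j.+1)%N]
    || [&& (pv s j.+1 < pv s j)%N, (pv s j < pv s i)%N & (pv s i < pv s i.+1)%N])].

Definition alpha (n : nat) : nat :=
  #|[set s : {perm 'I_n} |
      ~~ [exists i : 'I_n, exists j : 'I_n, bad_occ s i j]]|.

From mathcomp Require Import all_boot all_fingroup.
From mathcomp Require Import zify.
Set Implicit Arguments. Unset Strict Implicit. Unset Printing Implicit Defensive.

(* A word w of S_n avoids 21-34 and 34-21 iff every value at an ascent lies
   below every value at a descent ([separated]).  Reading w + 1 as the cycle
   0 -> w_1 + 1 -> ... -> w_n + 1 -> 0 is a bijection from S_n onto the
   (n+1)-cycles, and a stretching pair of that cycle is an ascent value above
   a descent value of the cyclic word 0 (w + 1), so C*_{n+1} corresponds to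
   the words that stay separated when their last position is counted as a
   descent ([cyc_separated]).  These are separated; appending n maps the other
   separated words, and prepending n maps all cyclically separated words,
   injectively to cyclically separated words of length n+1, which gives (2).
   For (1), Foata's transformation cutting w before each left-to-right minimum
   turns the ascent values of w into the excedances of a permutation, and w
   is cyclically separated iff its ascent values form an initial segment
   {0, ..., k-1}, i.e. iff its image has excedance pattern b^k a^(n-1-k). *)

Lemma ord_gt0 n (t : 'I_n) : 0 < n.
Proof. exact: leq_ltn_trans (leq0n t) (ltn_ord t). Qed.

Section Words.
Variable n : nat.
Implicit Types (s : {perm 'I_n}).

Lemma pvE s (i : 'I_n) : pv s i = s i.
Proof. by rewrite /pv; case: insubP => [j _ /val_inj -> | ]; rewrite ?ltn_ord. Qed.

Lemma pv_ltn s k : k < n -> pv s k < n.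
Proof. by move=> kn; rewrite -[k]/(nat_of_ord (Ordinal kn)) pvE. Qed.

Lemma pvKV s (y : 'I_n) : pv s ((s^-1)%g y) = y.
Proof. by rewrite pvE permKV. Qed.

Lemma pv_inj s a b : a < n -> b < n -> pv s a = pv s b -> a = b.
Proof.
move=> an bn; rewrite -[a]/(nat_of_ord (Ordinal an)) -[b]/(nat_of_ord (Ordinal bn)) !pvE.
by move=> /val_inj/perm_inj [].
Qed.

Definition ascent s a := (a.+1 < n) && (pv s a < pv s a.+1).
Definition descent s a := (a.+1 < n) && (pv s a.+1 < pv s a).

Lemma ascentN_descent s a : a.+1 < n -> ~~ ascent s a -> descent s a.
Proof.
move=> an; rewrite /ascent /descent an /= -leqNgt leq_eqVlt => /orP [/eqP E | //].
by have := pv_inj an (ltnW an) E; lia.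
Qed.

Definition separated s :=
  [forall a : 'I_n, forall b : 'I_n, ascent s a ==> descent s b ==> (pv s a < pv s b)].

Definition cyc_separated s :=
  separated s && [forall a : 'I_n, ascent s a ==> (pv s a < pv s n.-1)].

Lemma separatedP s :
  reflect (forall a b, ascent s a -> descent s b -> pv s a < pv s b) (separated s).
Proof.
apply: (iffP forallP) => [H a b ha hb | H a].
  have an : a < n by case/andP: ha => /ltnW.
  have bn : b < n by case/andP: hb => /ltnW.
  by have := forallP (H (Ordinal an)) (Ordinal bn); rewrite /= ha hb.
by apply/forallP => b; apply/implyP => ha; apply/implyP => hb; apply: H.
Qed.

Lemma cyc_separatedP s :
  reflect ((forall a b, ascent s a -> descent s b -> pv s a < pv s b) /\
           (forall a, ascent s a -> pv s a < pv s n.-1)) (cyc_separated s).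
Proof.
apply: (iffP andP) => [[/separatedP H1 /forallP H2] | [H1 H2]]; split => //.
- move=> a ha; have an : a < n by case/andP: ha => /ltnW.
  by have := H2 (Ordinal an); rewrite /= ha.
- exact/separatedP.
- by apply/forallP => a; apply/implyP; apply: H2.
Qed.

Lemma cyc_separated_separated s : cyc_separated s -> separated s.
Proof. by case/andP. Qed.

Lemma bad_occ_separated s i j : separated s -> ~~ bad_occ s i j.
Proof.
move/separatedP => H; apply/negP; case/and3P => ij jn.
have iS : i.+1 < n by lia.
case/orP => /and3P [h1 h2 h3].
- by have := H j i; rewrite /ascent /descent h1 h3 jn iS => /(_ isT isT); lia.
- by have := H i j; rewrite /ascent /descent h1 h3 jn iS => /(_ isT isT); lia.
Qed.

Lemma separatedN_bad_occ s a b :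
  ascent s a -> descent s b -> pv s b < pv s a ->
  [exists i : 'I_n, exists j : 'I_n, bad_occ s i j].
Proof.
case/andP => an ha /andP [bn hb] ba.
have bad i j : i < n -> j < n -> bad_occ s i j -> [exists i : 'I_n, exists j : 'I_n, bad_occ s i j].
  by move=> ilt jlt hij; apply/existsP; exists (Ordinal ilt); apply/existsP; exists (Ordinal jlt).
have [ab | ba'] := ltnP a.+1 b.
  by apply: (bad a b); rewrite 1?ltnW // /bad_occ ab bn hb ba ha orbT.
have [ba'' | ab'] := ltnP b.+1 a.
  by apply: (bad b a); rewrite 1?ltnW // /bad_occ ba'' an hb ba ha.
have : [|| a == b.+1, b == a.+1 | a == b] by lia.
by case/or3P => /eqP E; subst; lia.
Qed.

End Words.

Lemma alpha_separated n : alpha n = #|[set s : {perm 'I_n} | separated s]|.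
Proof.
apply: eq_card => s; rewrite !inE; apply/idP/idP => [H | sep]; last first.
  by apply/existsP => -[i /existsP [j]]; apply/negP/bad_occ_separated.
apply/separatedP => a b ha hb; rewrite ltnNge leq_eqVlt.
apply/negP => /orP [/eqP E | lt]; last by rewrite (separatedN_bad_occ ha hb lt) in H.
have an : a < n by case/andP: ha => /ltnW.
have bn : b < n by case/andP: hb => /ltnW.
by move: ha hb; rewrite (pv_inj bn an E) /ascent /descent; lia.
Qed.

Lemma lift_perm_inj n (i j : 'I_n.+1) : injective (@lift_perm n i j).
Proof.
move=> s t E; apply/permP => k; apply: (@lift_inj _ j).
by rewrite -(lift_perm_lift i j s) -(lift_perm_lift i j t) E.
Qed.

Section InsertMax.
Variable n : nat.
Implicit Types (s : {perm 'I_n}).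

Definition append_max s : {perm 'I_n.+1} := lift_perm ord_max ord_max s.
Definition prepend_max s : {perm 'I_n.+1} := lift_perm ord0 ord_max s.

Lemma pv_append_max s k : k < n -> pv (append_max s) k = pv s k.
Proof.
move=> kn; have := pvE (append_max s) (lift ord_max (Ordinal kn)).
by rewrite lift_perm_lift !lift_max => ->; rewrite (pvE s (Ordinal kn)).
Qed.

Lemma pv_append_max_last s : pv (append_max s) n = n.
Proof. by have := pvE (append_max s) ord_max; rewrite lift_perm_id. Qed.

Lemma pv_prepend_max0 s : pv (prepend_max s) 0 = n.
Proof. by have := pvE (prepend_max s) ord0; rewrite lift_perm_id. Qed.

Lemma pv_prepend_maxS s k : k < n -> pv (prepend_max s) k.+1 = pv s k.
Proof.
move=> kn; have := pvE (prepend_max s) (lift ord0 (Ordinal kn)).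
by rewrite lift_perm_lift lift0 lift_max => ->; rewrite (pvE s (Ordinal kn)).
Qed.

Lemma ascent_prepend_max0 s : ascent (prepend_max s) 0 = false.
Proof.
rewrite /ascent pv_prepend_max0; case: ltnP => //= n0.
by rewrite ltnS in n0; rewrite pv_prepend_maxS // ltnNge ltnW // pv_ltn.
Qed.

Lemma ascent_prepend_maxS s a : ascent (prepend_max s) a.+1 = ascent s a.
Proof.
by rewrite /ascent ltnS; case: (ltnP a.+1 n) => an //=; rewrite !pv_prepend_maxS // ltnW.
Qed.

Lemma descent_prepend_maxS s a : descent (prepend_max s) a.+1 = descent s a.
Proof.
by rewrite /descent ltnS; case: (ltnP a.+1 n) => an //=; rewrite !pv_prepend_maxS // ltnW.
Qed.

Lemma cyc_separated_prepend_max s : 0 < n -> cyc_separated s -> cyc_separated (prepend_max s).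
Proof.
move=> n0 /cyc_separatedP [H1 H2]; apply/cyc_separatedP; split.
- move=> [|a] b; first by rewrite ascent_prepend_max0.
  rewrite ascent_prepend_maxS => ha; have an : a.+1 < n by case/andP: ha.
  rewrite pv_prepend_maxS ?(ltnW an) //.
  case: b => [|b] hb; first by rewrite pv_prepend_max0 pv_ltn // ltnW.
  rewrite descent_prepend_maxS in hb; have bn : b.+1 < n by case/andP: hb.
  by rewrite pv_prepend_maxS ?(ltnW bn) //; apply: H1.
- move=> [|a]; first by rewrite ascent_prepend_max0.
  rewrite ascent_prepend_maxS => ha; have an : a.+1 < n by case/andP: ha.
  have -> : n.+1.-1 = n.-1.+1 by rewrite prednK.
  by rewrite !pv_prepend_maxS ?(ltnW an) ?prednK //; apply: H2.
Qed.

(* A separated word that is not cyclically separated has an ascent value above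
   its last value, hence above every descent value; so appending [n] creates
   no violation. *)
Lemma cyc_separated_append_max s :
  separated s -> ~~ cyc_separated s -> cyc_separated (append_max s).
Proof.
move=> /[dup] sep /separatedP H1; rewrite /cyc_separated sep negb_forall => /existsP [a0].
rewrite negb_imply -leqNgt => /andP [ha0 hle].
have a0n : a0.+1 < n by case/andP: ha0.
apply/cyc_separatedP; split => [a b ha hb | a ha]; last first.
  have an : a < n by case/andP: ha.
  by rewrite pv_append_max_last pv_append_max // pv_ltn.
have bn : b.+1 < n.
  case/andP: hb => bn h; rewrite ltnS leq_eqVlt in bn; case/orP: bn => [/eqP E | //].
  have bn : b < n by lia.
  by move: h; rewrite E pv_append_max_last pv_append_max // ltnNge ltnW // pv_ltn.
have hb' : descent s b.
  by move: hb; rewrite /descent !pv_append_max // ?ltnS ?(ltnW bn) // bn.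
rewrite (pv_append_max s (ltnW bn)).
case/andP: ha => an ha; rewrite ltnS leq_eqVlt in an; case/orP: an => [/eqP E | an].
  have := H1 _ _ ha0 hb'; move: hle.
  have -> : a = n.-1 by lia.
  by rewrite pv_append_max; lia.
rewrite !(pv_append_max s (ltnW an)) (pv_append_max s an) in ha *.
by apply: H1; rewrite // /ascent an.
Qed.

End InsertMax.

Lemma append_max_inj n : injective (@append_max n).
Proof. exact: lift_perm_inj. Qed.

Lemma prepend_max_inj n : injective (@prepend_max n).
Proof. exact: lift_perm_inj. Qed.

Notation cyc_sep_set n := [set s : {perm 'I_n} | cyc_separated s].

Lemma card_cyc_separated_le_alpha n : #|cyc_sep_set n| <= alpha n.
Proof.
rewrite alpha_separated; apply: subset_leq_card; apply/subsetP => s.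
by rewrite !inE => /cyc_separated_separated.
Qed.

Lemma alpha_le_card_cyc_separated n :
  alpha n <= #|cyc_sep_set n| + #|cyc_sep_set n.+1|.
Proof.
rewrite alpha_separated.
have -> : [set s : {perm 'I_n} | separated s] =
  cyc_sep_set n :|: [set s | separated s && ~~ cyc_separated s].
  apply/setP => s; rewrite !inE.
  by case: (boolP (cyc_separated s)) => [/cyc_separated_separated -> | _]; rewrite ?andbT.
apply: (leq_trans (leq_card_setU _ _)); rewrite leq_add2l.
rewrite -(card_imset _ (@append_max_inj n)); apply: subset_leq_card.
apply/subsetP => x /imsetP [s]; rewrite inE => /andP [h1 h2] ->.
by rewrite inE cyc_separated_append_max.
Qed.

Lemma card_cyc_separated_leS n : 0 < n -> #|cyc_sep_set n| <= #|cyc_sep_set n.+1|.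
Proof.
move=> n0; rewrite -(card_imset _ (@prepend_max_inj n)); apply: subset_leq_card.
apply/subsetP => x /imsetP [s]; rewrite inE => h ->.
by rewrite inE cyc_separated_prepend_max.
Qed.

Lemma full_cycleP (T : finType) (c : {perm T}) x0 :
  reflect (forall x, x \in porbit c x0) (#|porbits c| == 1).
Proof.
apply: (iffP idP) => [/cards1P [A EA] x | H].
  have h1 : porbit c x \in porbits c by apply: imset_f.
  have h2 : porbit c x0 \in porbits c by apply: imset_f.
  rewrite EA !inE in h1 h2.
  by rewrite (eqP h2) -(eqP h1) porbit_id.
apply/cards1P; exists (porbit c x0); apply/setP => A; rewrite inE.
apply/imsetP/eqP => [[y _ ->] | ->]; last by exists x0.
by apply/eqP; rewrite eq_porbit_mem.
Qed.

Lemma lift_permP n (i j : 'I_n.+1) (p : {perm 'I_n.+1}) :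
  p i = j -> exists s, p = lift_perm i j s.
Proof.
move=> pij.
have pl k : {k' | p (lift i k) = lift j k'}.
  case: (unliftP j (p (lift i k))) => [k' -> | E]; first by exists k'.
  by move/perm_inj: (etrans E (esym pij)) => /eqP; rewrite eq_sym (negbTE (neq_lift i k)).
have sinj : injective (fun k => sval (pl k)).
  move=> a b E; apply: (@lift_inj _ i); apply: (@perm_inj _ p).
  by rewrite (svalP (pl a)) (svalP (pl b)) E.
exists (perm sinj); apply/permP => x; case: (unliftP i x) => [k -> | ->].
  by rewrite lift_perm_lift permE; case: (pl k).
by rewrite lift_perm_id.
Qed.

Lemma card_porbit_full (T : finType) (c : {perm T}) x :
  #|porbits c| == 1 -> #|porbit c x| = #|T|.
Proof. by move/(full_cycleP _ x) => H; apply: eq_card => y; rewrite H. Qed.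

Lemma full_cycle_iter_inj n (c : {perm 'I_n}) (x : 'I_n) :
  is_full_cycle c -> injective (fun t : 'I_n => iter t c x).
Proof.
move=> full a b E; apply: val_inj.
have := uniq_traject_porbit c x; rewrite card_porbit_full // card_ord => U.
have := nth_uniq x _ _ U; rewrite size_traject => /(_ a b (ltn_ord a) (ltn_ord b)).
by rewrite !nth_traject // E eqxx => /esym/eqP.
Qed.

Section WordCycle.
Variable n : nat.
Implicit Types (s : {perm 'I_n}).

Definition rot_perm : {perm 'I_n.+1} := perm (@ordS_inj n.+1).
Definition shift_perm s : {perm 'I_n.+1} := lift_perm ord0 ord0 s.

(* The (n+1)-cycle 0 -> s(0)+1 -> s(1)+1 -> ... -> s(n-1)+1 -> 0. *)
Definition word_cycle s : {perm 'I_n.+1} := (rot_perm ^ shift_perm s)%g.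

Lemma rot_permE (t : 'I_n.+1) : nat_of_ord (rot_perm t) = if t < n then t.+1 else 0.
Proof.
rewrite permE /=; case: ltnP => h; first by rewrite modn_small.
have -> : nat_of_ord t = n by have := ltn_ord t; lia.
exact: modnn.
Qed.

Lemma word_cycle_shift s t : word_cycle s (shift_perm s t) = shift_perm s (rot_perm t).
Proof. exact: permJ. Qed.

Lemma shift_perm0 s : shift_perm s ord0 = ord0.
Proof. exact: lift_perm_id. Qed.

Lemma shift_perm_iter s (t : 'I_n.+1) : shift_perm s t = iter t (word_cycle s) ord0.
Proof.
suff H k : k < n.+1 -> iter k (word_cycle s) ord0 = shift_perm s (inord k).
  by rewrite H // inord_val.
elim: k => [|k IH] kn.
  by rewrite -[LHS](shift_perm0 s); congr (shift_perm s _); apply: val_inj; rewrite /= inordK.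
rewrite iterS IH 1?ltnW // word_cycle_shift; congr (shift_perm s _).
by apply: val_inj; rewrite /= rot_permE !inordK ?(ltnW kn) // -ltnS kn.
Qed.

Lemma word_cycle_full s : is_full_cycle (word_cycle s).
Proof.
apply/(full_cycleP _ ord0) => x; apply/porbitP.
by exists ((shift_perm s)^-1 x)%g; rewrite permX -shift_perm_iter permKV.
Qed.

Lemma word_cycle_inj : injective word_cycle.
Proof.
move=> s t E; apply: (@lift_perm_inj _ ord0 ord0).
by apply/permP => u; rewrite -/(shift_perm s) -/(shift_perm t) !shift_perm_iter E.
Qed.

Lemma word_cycle_onto (c : {perm 'I_n.+1}) : is_full_cycle c -> exists s, c = word_cycle s.
Proof.
move=> full; pose F := perm (@full_cycle_iter_inj _ c ord0 full).
have FE t : F t = iter t c ord0 by rewrite permE.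
have [s Fs] : exists s, F = shift_perm s by apply: lift_permP; rewrite FE.
exists s; apply/permP => x; rewrite -(permKV F x) Fs word_cycle_shift -Fs.
set y := (F^-1 x)%g; rewrite !FE -iterS rot_permE; case: ltnP => // yn.
have -> : nat_of_ord y = n by have := ltn_ord y; lia.
by have := iter_porbit c ord0; rewrite card_porbit_full // card_ord.
Qed.

Definition shift_pv s k := if k is k'.+1 then (pv s k').+1 else 0.

Lemma shift_pv_gt0 s k : 0 < k -> shift_pv s k = (pv s k.-1).+1.
Proof. by case: k. Qed.

Definition cyc_succ k := if k < n then k.+1 else 0.

Lemma shift_permE s (u : 'I_n.+1) : nat_of_ord (shift_perm s u) = shift_pv s u.
Proof.
case: (unliftP ord0 u) => [j -> | ->]; last by rewrite shift_perm0.
by rewrite /shift_perm lift_perm_lift !lift0 /= pvE.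
Qed.

Lemma word_cycle_shiftE s (u : 'I_n.+1) :
  nat_of_ord (word_cycle s (shift_perm s u)) = shift_pv s (cyc_succ u).
Proof. by rewrite word_cycle_shift shift_permE rot_permE. Qed.

Definition shift_stretch s u v :=
  [&& shift_pv s u < shift_pv s v, shift_pv s (cyc_succ u) < shift_pv s u
    & shift_pv s v < shift_pv s (cyc_succ v)].

Lemma stretching_pair_shift s u v :
  stretching_pair (word_cycle s) (shift_perm s u) (shift_perm s v) = shift_stretch s u v.
Proof. by rewrite /stretching_pair !word_cycle_shiftE !shift_permE. Qed.

Lemma cyc_separated_shift_stretch s u v :
  cyc_separated s -> u < n.+1 -> v < n.+1 -> ~~ shift_stretch s u v.
Proof.
move=> /cyc_separatedP [H1 H2] un vn; apply/negP.
case: u un => [|a] un.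
  by rewrite /shift_stretch /cyc_succ /=; case: (0 < n); rewrite /= ?andbF.
case: v vn => [|b] vn; first by rewrite /shift_stretch /=.
rewrite /shift_stretch /cyc_succ /= !ltnS.
case: (ltnP b.+1 n) => bn; last by rewrite /= ltn0 !andbF.
have asc_b : pv s b < pv s b.+1 -> ascent s b by rewrite /ascent bn.
case: (ltnP a.+1 n) => an /=.
  case/and3P => h1 h2 /asc_b h3.
  have da : descent s a by rewrite /descent an h2.
  by have := H1 _ _ h3 da; lia.
case/andP => h1 /asc_b h3.
have ea : a = n.-1 by lia.
by have := H2 _ h3; rewrite -ea; lia.
Qed.

Lemma shift_stretch_cyc_separated s :
  (forall u v, u < n.+1 -> v < n.+1 -> ~~ shift_stretch s u v) -> cyc_separated s.
Proof.
move=> H; apply/cyc_separatedP; split.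
  move=> a b ha hb; have an : a.+1 < n by case/andP: ha.
  have bn : b.+1 < n by case/andP: hb.
  case: (ltngtP (pv s a) (pv s b)) => // h.
    have := H b.+1 a.+1; rewrite /shift_stretch /cyc_succ /= an bn /= !ltnS h.
    case/andP: ha => _ ->; case/andP: hb => _ ->.
    by move=> /(_ (ltnW bn) (ltnW an)).
  by move: ha hb; rewrite (pv_inj (ltnW an) (ltnW bn) h) /ascent /descent; lia.
move=> a ha; have an : a.+1 < n by case/andP: ha.
have n0 : 0 < n by lia.
case: (ltngtP (pv s a) (pv s n.-1)) => // h.
  have := H n a.+1; rewrite /shift_stretch /cyc_succ /= an ltnn (shift_pv_gt0 s n0) /=.
  rewrite !ltnS h; case/andP: ha => _ -> /=.
  by move=> /(_ (leqnn _) (ltnW an)).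
have nn : n.-1 < n by lia.
by have := pv_inj (ltnW an) nn h; lia.
Qed.

Lemma word_cycle_Cstar s : (word_cycle s \in Cstar n.+1) = cyc_separated s.
Proof.
rewrite inE word_cycle_full /=; apply/idP/idP => [H | H].
  apply: shift_stretch_cyc_separated => u v un vn; apply/negP => st; apply: (negP H).
  apply/existsP; exists (shift_perm s (Ordinal un)); apply/existsP.
  by exists (shift_perm s (Ordinal vn)); rewrite stretching_pair_shift.
apply/negP => /existsP [i /existsP [j]].
rewrite -(permKV (shift_perm s) i) -(permKV (shift_perm s) j) stretching_pair_shift.
by apply/negP/cyc_separated_shift_stretch.
Qed.

End WordCycle.

Lemma card_Cstar n : #|Cstar n.+1| = #|cyc_sep_set n|.
Proof.
rewrite -(card_imset _ (@word_cycle_inj n)); apply: eq_card => c.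
apply/idP/imsetP => [Cc | [s]]; last by rewrite inE => hs ->; rewrite word_cycle_Cstar.
have [s Es] : exists s, c = word_cycle s.
  by apply: word_cycle_onto; move: Cc; rewrite inE => /andP [].
by exists s; rewrite // inE -word_cycle_Cstar -Es.
Qed.

Definition cycle_min n (c : {perm 'I_n}) (x : 'I_n) :=
  [forall y, (y \in porbit c x) ==> (x <= y)].

Section Foata.
Variable n : nat.
Implicit Types (s : {perm 'I_n}).

Definition ltr_min s k := [forall j : 'I_n, (j < k) ==> (pv s k < pv s j)].

Definition block_start s k := \max_(j < n | (j <= k) && ltr_min s j) j.

Lemma ltr_minP s k : k < n -> reflect (forall j, j < k -> pv s k < pv s j) (ltr_min s k).
Proof.
move=> kn; apply: (iffP forallP) => [H j jk | H j]; last by apply/implyP => /H.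
by have := H (Ordinal (ltn_trans jk kn)); rewrite /= jk.
Qed.

Lemma ltr_min0 s : ltr_min s 0.
Proof. by apply/forallP. Qed.

Lemma ltr_min_lt s i j : j < n -> ltr_min s j -> i < j -> pv s j < pv s i.
Proof. by move=> jn /(ltr_minP s jn); apply. Qed.

Lemma ltr_min_below s j : j < n -> exists2 i, i <= j & ltr_min s i && (pv s i <= pv s j).
Proof.
elim/ltn_ind: j => j IH jn.
case: (boolP (ltr_min s j)) => lj; first by exists j; rewrite ?lj ?leqnn.
move: lj; rewrite negb_forall => /existsP [i]; rewrite negb_imply -leqNgt => /andP [ij hi].
have [i' i'i /andP [li' hi']] := IH i ij (ltn_ord i).
by exists i'; [exact: leq_trans (ltnW ij) | rewrite li' (leq_trans hi' hi)].
Qed.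

Lemma block_start_leq s k : block_start s k <= k.
Proof. by apply/bigmax_leqP => j /andP []. Qed.

Lemma leq_block_start s k j : j < n -> j <= k -> ltr_min s j -> j <= block_start s k.
Proof.
move=> jn jk lj; apply: (@leq_bigmax_cond _ _ (fun j : 'I_n => nat_of_ord j) (Ordinal jn)).
by rewrite /= jk lj.
Qed.

Section PositiveLength.
Hypothesis n_gt0 : 0 < n.

Lemma block_start_ltn s k : block_start s k < n.
Proof.
apply: (@leq_ltn_trans n.-1); last by rewrite prednK.
by apply/bigmax_leqP => j _; rewrite -ltnS prednK.
Qed.

Lemma block_start_ltr_min s k : ltr_min s (block_start s k).
Proof.
have [|j /andP [_ lj] E] :=
  @eq_bigmax_cond _ [pred j : 'I_n | (j <= k) && ltr_min s j] (fun j => nat_of_ord j).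
  by apply/card_gt0P; exists (Ordinal n_gt0); rewrite inE /= ltr_min0.
suff -> : block_start s k = j by [].
by rewrite /block_start -E; apply: eq_bigl => i; rewrite inE.
Qed.

Lemma block_start_min s k j : j <= k -> k < n -> pv s (block_start s k) <= pv s j.
Proof.
move=> jk kn; have [i ij /andP [li hi]] := ltr_min_below s (leq_ltn_trans jk kn).
have := leq_block_start (leq_ltn_trans (leq_trans ij jk) kn) (leq_trans ij jk) li.
rewrite leq_eqVlt => /orP [/eqP <- // | ib].
have := ltr_min_lt (block_start_ltn s k) (block_start_ltr_min s k) ib; lia.
Qed.

Lemma block_start_id s k : k < n -> ltr_min s k -> block_start s k = k.
Proof. by move=> kn lk; apply/eqP; rewrite eqn_leq block_start_leq leq_block_start. Qed.

Lemma block_startS s k : k.+1 < n -> ~~ ltr_min s k.+1 -> block_start s k.+1 = block_start s k.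
Proof.
move=> kn nl; apply/eqP; rewrite eqn_leq; apply/andP; split; last first.
  apply: leq_block_start; rewrite ?block_start_ltn ?block_start_ltr_min //.
  exact: leq_trans (block_start_leq s k) _.
have ne : block_start s k.+1 != k.+1 by apply: contraNneq nl => <-; exact: block_start_ltr_min.
apply: leq_block_start; rewrite ?block_start_ltn ?block_start_ltr_min //.
by have := block_start_leq s k.+1; lia.
Qed.

End PositiveLength.

Definition block_continues s (t : 'I_n) := (t.+1 < n) && ~~ ltr_min s t.+1.

Definition block_next s (t : 'I_n) : 'I_n :=
  insubd t (if block_continues s t then t.+1 else block_start s t).

Lemma block_nextE s t :
  nat_of_ord (block_next s t) = if block_continues s t then t.+1 else block_start s t.
Proof.
rewrite /block_next val_insubd; case: (boolP (block_continues s t)) => [/andP [-> _] // | _].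
by rewrite block_start_ltn // (ord_gt0 t).
Qed.

Lemma block_next_inj s : injective (block_next s).
Proof.
move=> a b E; apply: val_inj; have := congr1 val E; rewrite /= !block_nextE.
have n0 := ord_gt0 a.
have cont_start (x y : 'I_n) : block_continues s x -> x.+1 <> block_start s y.
  by rewrite /block_continues => /andP [_ /negP nx] E'; apply: nx; rewrite E' block_start_ltr_min.
have stop_start (x y : 'I_n) :
    ~~ block_continues s x -> x < y -> block_start s x <> block_start s y.
  move=> hx xy E'; have x1 : x.+1 < n by exact: leq_ltn_trans xy (ltn_ord y).
  move: hx; rewrite /block_continues x1 negbK => lx.
  by have := leq_block_start x1 xy lx; have := block_start_leq s x; lia.
case: (boolP (block_continues s a)) => ha; case: (boolP (block_continues s b)) => hb.
- by move=> [->].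
- by move/(cont_start a b ha).
- by move/esym/(cont_start b a hb).
- case: (ltngtP a b) => // ab E'.
    by case: (stop_start _ _ ha ab E').
  by case: (stop_start _ _ hb ab (esym E')).
Qed.

Definition block_cycle s : {perm 'I_n} := perm (@block_next_inj s).

(* Foata's fundamental transformation: the blocks of [s] become the cycles. *)
Definition foata s : {perm 'I_n} := (block_cycle s ^ s)%g.

Lemma block_cycleE s t :
  nat_of_ord (block_cycle s t) = if block_continues s t then t.+1 else block_start s t.
Proof. by rewrite permE block_nextE. Qed.

Lemma block_start_cycle s t : block_start s (block_cycle s t) = block_start s t.
Proof.
have n0 := ord_gt0 t; rewrite block_cycleE.
rewrite /block_continues; case: ifP => [/andP [tn nl] | _]; first by rewrite block_startS.
by rewrite block_start_id ?block_start_ltn ?block_start_ltr_min.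
Qed.

Lemma block_start_cycleX s t i : block_start s ((block_cycle s ^+ i)%g t) = block_start s t.
Proof. by elim: i => [|i IH]; rewrite ?expg0 ?perm1 // expgSr permM block_start_cycle. Qed.

Lemma block_cycle_reach s t : exists i, nat_of_ord ((block_cycle s ^+ i)%g t) = block_start s t.
Proof.
move: {2}(n - t) (leqnn (n - t)) => m; elim: m t => [|m IH] t tm.
  by have := ltn_ord t; lia.
case: (boolP (block_continues s t)) => ht; last first.
  by exists 1; rewrite expg1 block_cycleE (negbTE ht).
have [|i Hi] := IH (block_cycle s t); first by rewrite block_cycleE ht; lia.
by exists i.+1; rewrite expgS permM Hi block_start_cycle.
Qed.

Lemma foataE s t : foata s (s t) = s (block_cycle s t).
Proof. exact: permJ. Qed.

Lemma foataX s t i : ((foata s) ^+ i)%g (s t) = s ((block_cycle s ^+ i)%g t).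
Proof. by rewrite /foata -conjXg permJ. Qed.

Lemma foata_exceedance s t : (s t < foata s (s t)) = ascent s t.
Proof.
have n0 := ord_gt0 t.
rewrite foataE -(pvE s t) -pvE block_cycleE /ascent /block_continues.
case: (ltnP t.+1 n) => [tn | tn] /=; last first.
  by apply/negbTE; rewrite -leqNgt block_start_min.
case: (boolP (ltr_min s t.+1)) => [l1 | //] /=.
by rewrite !ltnNge block_start_min // (ltnW (ltr_min_lt tn l1 (ltnSn t))).
Qed.

Lemma cycle_min_foata s t : cycle_min (foata s) (s t) = ltr_min s t.
Proof.
have n0 := ord_gt0 t.
apply/idP/idP => [cm | lt]; last first.
  apply/forallP => y; apply/implyP => /porbitP [i ->]; rewrite foataX -(pvE s t) -pvE.
  by rewrite -{1}(block_start_id (ltn_ord t) lt) -(block_start_cycleX s t i) block_start_min.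
apply: contraLR cm => nl; rewrite negb_forall; apply/existsP.
have [i Hi] := block_cycle_reach s t; exists ((foata s ^+ i)%g (s t)).
rewrite negb_imply mem_porbit -ltnNge foataX -(pvE s t) -pvE Hi.
have ne : block_start s t != t by apply: contraNneq nl => <-; exact: block_start_ltr_min.
have := block_start_min n0 s (leqnn t) (ltn_ord t); rewrite leq_eqVlt => /orP [/eqP E | //].
by move: ne; rewrite (pv_inj (block_start_ltn n0 s t) (ltn_ord t) E) eqxx.
Qed.

Definition max_cycle_min (c : {perm 'I_n}) (P : pred nat) :=
  \max_(y | cycle_min c y && P y) (nat_of_ord y).

(* The value following [x] in a word whose Foata transform is [c], given
   that the values before lie in [P]. *)
Definition foata_succ (c : {perm 'I_n}) (P : pred nat) (x : 'I_n) :=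
  if cycle_min c (c x) then max_cycle_min c P else nat_of_ord (c x).

Lemma eq_foata_succ c (P Q : pred nat) x : P =1 Q -> foata_succ c P x = foata_succ c Q x.
Proof. by move=> PQ; rewrite /foata_succ; case: ifP => // _; apply: eq_bigl => y; rewrite PQ. Qed.

(* Values at left-to-right minima decrease, so the leftmost one in [P]
   carries the largest value. *)
Lemma max_cycle_min_foata s (P : pred nat) (t : 'I_n) :
  ltr_min s t -> P (pv s t) -> (forall u : 'I_n, ltr_min s u -> P (pv s u) -> t <= u) ->
  max_cycle_min (foata s) P = pv s t.
Proof.
move=> lt Pt tmin; apply/eqP; rewrite eqn_leq; apply/andP; split.
  apply/bigmax_leqP => y /andP [].
  rewrite -(permKV s y); set u := (s^-1)%g y; rewrite cycle_min_foata -(pvE s u) => ly Py.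
  have := tmin u ly Py; rewrite leq_eqVlt => /orP [/eqP/val_inj -> // | tu].
  by apply: ltnW; apply: ltr_min_lt.
rewrite pvE; apply: (@leq_bigmax_cond _ _ (fun y : 'I_n => nat_of_ord y) (s t)).
by rewrite cycle_min_foata lt -pvE.
Qed.

Lemma pv0_foata s : 0 < n -> pv s 0 = max_cycle_min (foata s) predT.
Proof.
move=> n0; rewrite -[0]/(nat_of_ord (Ordinal n0)).
by rewrite (@max_cycle_min_foata s predT (Ordinal n0)) ?ltr_min0.
Qed.

Lemma pvS_foata s (t : 'I_n) : t.+1 < n ->
  pv s t.+1 = foata_succ (foata s) [pred y | [forall j : 'I_n, (j <= t) ==> (y < pv s j)]] (s t).
Proof.
move=> tn; rewrite /foata_succ foataE cycle_min_foata.
have := block_cycleE s t; rewrite /block_continues tn /=.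
case: (boolP (ltr_min s t.+1)) => /= [l1 | nl] bc; last first.
  have -> : block_cycle s t = Ordinal tn by apply: val_inj.
  by rewrite (negbTE nl) -pvE.
have -> : ltr_min s (block_cycle s t) by rewrite bc block_start_ltr_min // (ord_gt0 t).
rewrite -[t.+1]/(nat_of_ord (Ordinal tn)) (@max_cycle_min_foata s _ (Ordinal tn)) //=.
move=> u lu /forallP Pu; rewrite leqNgt; apply/negP => ut.
by have := implyP (Pu u) ut; rewrite ltnn.
Qed.

Lemma foata_inj : injective foata.
Proof.
move=> s s' E; suff H k : k < n -> pv s k = pv s' k.
  by apply/permP => t; apply: val_inj; rewrite /= -!pvE H.
elim/ltn_ind: k => -[|k] IH kn; first by rewrite !pv0_foata ?E.
have kn' : k < n by exact: ltnW.
have st : s (Ordinal kn') = s' (Ordinal kn') by apply: val_inj; rewrite /= -!pvE IH.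
rewrite (@pvS_foata s (Ordinal kn') kn) (@pvS_foata s' (Ordinal kn') kn) E st.
apply: eq_foata_succ => y /=; apply: eq_forallb => j.
by case: (leqP j k) => //= jk; rewrite IH // ltnS.
Qed.

End Foata.

Section AscentValues.
Variable n : nat.
Implicit Types (s : {perm 'I_n}).

Definition ascent_val s (x : 'I_n) := ascent s ((s^-1)%g x).

Lemma ascent_valE s a (an : a < n) : ascent_val s (s (Ordinal an)) = ascent s a.
Proof. by rewrite /ascent_val permK. Qed.

Definition exc_prefix k (c : {perm 'I_n}) :=
  [forall i : 'I_n, (i < n.-1) ==> ((i < c i) == (i < k))].

Lemma foata_exceedance_val s (x : 'I_n) : (x < foata s x) = ascent_val s x.
Proof. by rewrite /ascent_val -foata_exceedance permKV. Qed.

Lemma ascent_val_last s (x : 'I_n) : nat_of_ord x = n.-1 -> ascent_val s x = false.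
Proof.
move=> xn; apply/negbTE; rewrite /ascent_val /ascent pvKV xn.
by apply/negP => /andP [un]; have := pv_ltn s un; lia.
Qed.

Lemma exc_prefix_foataP s k : k < n ->
  reflect (forall x, ascent_val s x = (x < k)) (exc_prefix k (foata s)).
Proof.
move=> kn; apply: (iffP forallP) => H x.
  case: (ltnP x n.-1) => xn; first by have := implyP (H x) xn; rewrite foata_exceedance_val => /eqP.
  have xe : nat_of_ord x = n.-1 by have := ltn_ord x; lia.
  by rewrite ascent_val_last //; apply/esym/negbTE; lia.
by apply/implyP => _; rewrite foata_exceedance_val H.
Qed.

Lemma ascent_val_prefix_cyc_separated s k :
  (forall x, ascent_val s x = (x < k)) -> cyc_separated s.
Proof.
move=> H.
have asc a : ascent s a -> pv s a < k.
  move=> ha; have an : a < n by case/andP: ha => /ltnW.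
  by have := H (s (Ordinal an)); rewrite ascent_valE ha -pvE => <-.
have nasc a : a < n -> ~~ ascent s a -> k <= pv s a.
  move=> an /negbTE na; have := H (s (Ordinal an)).
  by rewrite ascent_valE na -pvE => /esym/negbT; rewrite -leqNgt.
apply/cyc_separatedP; split => [a b ha hb | a ha].
  apply: leq_trans (asc a ha) (nasc b _ _); first by case/andP: hb => /ltnW.
  by move: hb; rewrite /ascent /descent; lia.
have an : a.+1 < n by case/andP: ha.
by apply: leq_trans (asc a ha) (nasc _ _ _); rewrite /ascent; lia.
Qed.

Lemma ascent_val_down s (x y : 'I_n) :
  cyc_separated s -> ascent_val s x -> y < x -> ascent_val s y.
Proof.
move=> /cyc_separatedP [H1 H2]; rewrite /ascent_val => hx yx; apply: contraT => hy.
rewrite -(pvKV s x) -(pvKV s y) in yx.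
set t := (s^-1)%g x in hx yx; set u := (s^-1)%g y in hy yx.
case: (ltnP u.+1 n) => un; first by have := H1 _ _ hx (ascentN_descent un hy); lia.
have ue : nat_of_ord u = n.-1 by have := ltn_ord u; lia.
by have := H2 _ hx; rewrite -ue; lia.
Qed.

Lemma cyc_separated_ascent_val_prefix s :
  0 < n -> cyc_separated s -> exists2 k, k < n & forall x, ascent_val s x = (x < k).
Proof.
move=> n0 cs.
have ln : n.-1 < n by rewrite ltn_predL.
have exP : exists m, [exists x, (nat_of_ord x == m) && ~~ ascent_val s x].
  by exists n.-1; apply/existsP; exists (Ordinal ln); rewrite eqxx ascent_val_last.
case: (ex_minnP exP) => k /existsP [x /andP [/eqP <- nx]] kmin.
exists x => // y; apply/idP/idP => [hy | yx]; last first.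
  apply: contraT => ny; have := kmin y; rewrite leqNgt yx; apply.
  by apply/existsP; exists y; rewrite eqxx.
by apply: contraT; rewrite -leqNgt leq_eqVlt => /orP [/eqP/val_inj xy | /(ascent_val_down cs hy)];
  [move: nx; rewrite xy hy | rewrite (negbTE nx)].
Qed.

End AscentValues.

Lemma card_set_sum (T : finType) (P : pred T) : #|[set x | P x]| = \sum_x P x.
Proof. by rewrite -sum1_card big_mkcond; apply: eq_bigr => x _; rewrite inE; case: (P x). Qed.

Lemma sum_card_disjoint (I T : finType) (P : I -> pred T) :
  (forall x i j, P i x -> P j x -> i = j) ->
  \sum_i #|[set x | P i x]| = #|[set x | [exists i, P i x]]|.
Proof.
move=> Puniq; under eq_bigr do rewrite card_set_sum.
rewrite exchange_big card_set_sum; apply: eq_bigr => x _.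
case: existsP => [[i Pi] | nP]; last first.
  by rewrite big1 // => i _; apply/eqP; rewrite eqb0; apply/negP => Pi; apply: nP; exists i.
rewrite (bigD1 i) //= Pi big1 // => j ji; apply/eqP; rewrite eqb0.
by apply: contra ji => Pj; rewrite (Puniq x j i).
Qed.

Lemma card_cyc_separated n : 0 < n -> #|cyc_sep_set n| = \sum_(k < n) bacount n k.
Proof.
move=> n0.
have bacountE (k : 'I_n) : bacount n k = #|[set s : {perm 'I_n} | exc_prefix k (foata s)]|.
  by rewrite /bacount -(card_preimset _ (@foata_inj n)); apply: eq_card => s; rewrite !inE.
rewrite (eq_bigr _ (fun k _ => bacountE k)) sum_card_disjoint.
  apply: eq_card => s; rewrite !inE; apply/idP/existsP => [cs | [k /exc_prefix_foataP]].
    have [k kn /(exc_prefix_foataP _ kn) pk] := cyc_separated_ascent_val_prefix n0 cs.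
    by exists (Ordinal kn).
  by move=> /(_ (ltn_ord k)); apply: ascent_val_prefix_cyc_separated.
move=> s i j /(exc_prefix_foataP _ (ltn_ord i)) Hi /(exc_prefix_foataP _ (ltn_ord j)) Hj.
have ji : j <= i by rewrite leqNgt -Hj Hi ltnn.
have ij : i <= j by rewrite leqNgt -Hi Hj ltnn.
by apply/val_inj/eqP; rewrite eqn_leq ij ji.
Qed.

Theorem lemma1p6 (n : nat) (hn : (1 <= n)%N) :
  #|Cstar n.+1| = (\sum_(k < n) bacount n k)%N /\
  [/\ (#|Cstar n.+1| <= alpha n)%N,
      (alpha n <= #|Cstar n.+1| + #|Cstar n.+2|)%N &
      (#|Cstar n.+1| + #|Cstar n.+2| <= 2 * #|Cstar n.+2|)%N].
Proof.
rewrite !card_Cstar; split; first exact: card_cyc_separated.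
split.
- exact: card_cyc_separated_le_alpha.
- exact: alpha_le_card_cyc_separated.
- by rewrite mul2n -addnn leq_add2r card_cyc_separated_leS.
Qed.
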